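(* For every $n\ge4$, $\operatorname{sdim}(K_{n-3}+\epsilon_3)=n-1$.
   Context: $\epsilon_3$ is the graph with three vertices and no edges; $K_{n-3}+\epsilon_3$ is obtained from disjoint copies of $K_{n-3}$ and $\epsilon_3$ by adding all edges between them. A unit-distance embedding of a graph $G$ in $\mathbb{R}^n$ is an injective map $f$ from the vertex set of $G$ to $\mathbb{R}^n$ such that $|f(u)-f(v)|=1$ for every edge $uv$ and no point $f(w)$ lies on the segment $[f(u),f(v)]$ for an edge $uv$ with $w\notin\{u,v\}$. $G$ admits a spherical embedding of dimension $k$ and radius $r$ if $G$ has a unit-distance embedding in $\mathbb{R}^k$ all of whose vertices lie on a sphere $\{x\in\mathbb{R}^k:|x-c|=r\}$. $\operatorname{sdim}G$ is the least $k$ such that $G$ admits a spherical embedding of dimension $k$ and some radius $r<1$. *)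

From HB Require Import structures.
From mathcomp Require Import all_boot all_order all_algebra.
From mathcomp Require Import reals.
Set Implicit Arguments. Unset Strict Implicit. Unset Printing Implicit Defensive.
Import Order.TTheory GRing.Theory Num.Theory.
Local Open Scope ring_scope.

Definition edist (R : realType) (k : nat) (x y : 'rV[R]_k) : R :=
  Num.sqrt (\sum_(i < k) (x ord0 i - y ord0 i) ^+ 2).

Definition on_segment (R : realType) (k : nat) (p a b : 'rV[R]_k) : Prop :=
  exists t : R, 0 <= t /\ t <= 1 /\ p = (1 - t) *: a + t *: b.

(* A graph is an (irreflexive, symmetric) edge relation on a finite vertex type. *)
Definition complete_rel (T : finType) : rel T := fun x y => x != y.
Definition empty_rel (T : finType) : rel T := fun _ _ => false.

Definition join_rel (A B : finType) (ea : rel A) (eb : rel B) : rel (sum A B) :=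
  fun x y => match x, y with
             | inl a, inl a' => ea a a'
             | inr b, inr b' => eb b b'
             | _, _ => true
             end.

Definition K_plus_eps3 (m : nat) : rel (sum (ordinal m) (ordinal 3)) :=
  join_rel (@complete_rel 'I_m) (@empty_rel 'I_3).
Arguments K_plus_eps3 m : clear implicits.

Definition unit_distance_embedding (R : realType) (V : finType) (e : rel V)
    (k : nat) (f : V -> 'rV[R]_k) : Prop :=
  injective f /\
  (forall u v, e u v -> edist (f u) (f v) = 1) /\
  (forall u v w, e u v -> w != u -> w != v -> ~ on_segment (f w) (f u) (f v)).

Definition spherical_embedding (R : realType) (V : finType) (e : rel V)
    (k : nat) (r : R) : Prop :=
  exists f : V -> 'rV[R]_k, unit_distance_embedding e f /\
    exists c : 'rV[R]_k, forall v, edist (f v) c = r.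

Definition sph_lt1 (R : realType) (V : finType) (e : rel V) (k : nat) : Prop :=
  exists r : R, r < 1 /\ spherical_embedding e k r.

Definition is_sdim (R : realType) (V : finType) (e : rel V) (k : nat) : Prop :=
  sph_lt1 R e k /\ forall j : nat, (j < k)%N -> ~ sph_lt1 R e j.

From HB Require Import structures.
From mathcomp Require Import all_boot all_order all_algebra.
From mathcomp Require Import reals.
From mathcomp Require Import ring lra zify.
Set Implicit Arguments. Unset Strict Implicit. Unset Printing Implicit Defensive.
Import Order.TTheory GRing.Theory Num.Theory.
Local Open Scope ring_scope.

(* sdim (K_(n-3) + eps_3) = n - 1 for n >= 4.  With m = n - 3 the claim is that m + 2 is
   the least dimension of a spherical unit-distance embedding of K_m + eps_3 of radius < 1.
   Upper bound: send the clique vertices to e_1, ..., e_m and the independent vertices to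
   e_(m+1), -e_(m+1), e_(m+2), all scaled by 1/sqrt 2.  Adjacent vertices go to orthogonal
   vectors of length 1/sqrt 2, hence are at distance 1, and no point of a sphere lies
   inside a chord of it, so this is an embedding on the sphere of radius 1/sqrt 2 < 1.
   Lower bound (for every radius): centre the sphere at the origin, with squared radius s.
   Each edge uv then satisfies 2 <A u, A v> = 2 s - 1.  Hence the clique vectors a_i are
   orthogonal to the chords b_1 - b_0, b_2 - b_0 joining the independent vertices and have
   the dual family 2 (a_j - b_0), while the two chords are independent because three
   distinct points of a sphere are not collinear.  So R^k contains m + 2 independent vectors. *)

Section InnerProduct.
Variables (R : realFieldType) (k : nat).
Implicit Types (u v w : 'rV[R]_k).

Definition dot u v : R := \sum_i u ord0 i * v ord0 i.

Lemma dotC u v : dot u v = dot v u.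
Proof. by apply: eq_bigr => i _; rewrite mulrC. Qed.

Lemma dotDl u v w : dot (u + v) w = dot u w + dot v w.
Proof. by rewrite /dot -big_split; apply: eq_bigr => i _; rewrite !mxE mulrDl. Qed.

Lemma dotZl (a : R) u w : dot (a *: u) w = a * dot u w.
Proof. by rewrite /dot mulr_sumr; apply: eq_bigr => i _; rewrite !mxE mulrA. Qed.

Lemma dotNl u w : dot (- u) w = - dot u w.
Proof. by rewrite -scaleN1r dotZl mulN1r. Qed.

Lemma dotBl u v w : dot (u - v) w = dot u w - dot v w.
Proof. by rewrite dotDl dotNl. Qed.

Lemma dot0l w : dot 0 w = 0.
Proof. by rewrite -(scale0r 0) dotZl mul0r. Qed.

Lemma dotDr u v w : dot w (u + v) = dot w u + dot w v.
Proof. by rewrite dotC dotDl !(dotC w). Qed.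

Lemma dotBr u v w : dot w (u - v) = dot w u - dot w v.
Proof. by rewrite dotC dotBl !(dotC w). Qed.

Lemma dotZr (a : R) u w : dot w (a *: u) = a * dot w u.
Proof. by rewrite dotC dotZl dotC. Qed.

Lemma dotNr u w : dot w (- u) = - dot w u.
Proof. by rewrite dotC dotNl dotC. Qed.

Lemma dot_suml (I : finType) (F : I -> 'rV[R]_k) w :
  dot (\sum_i F i) w = \sum_i dot (F i) w.
Proof. by elim/big_rec2: _ => [|i y1 y2 _ <-]; [exact: dot0l | exact: dotDl]. Qed.

Lemma dot_sub_expand u v : dot (u - v) (u - v) = dot u u + dot v v - 2 * dot u v.
Proof. by rewrite dotBl !dotBr (dotC v u); ring. Qed.

Lemma dot_ge0 u : 0 <= dot u u.
Proof. by apply: sumr_ge0 => i _; rewrite -expr2 sqr_ge0. Qed.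

Lemma dot_eq0 u : dot u u = 0 -> u = 0.
Proof.
move=> u0; apply/rowP => i; rewrite mxE.
have sq0 := @psumr_eq0P _ _ xpredT (fun j => u ord0 j ^+ 2) (fun j _ => sqr_ge0 _).
have /eqP := sq0 (etrans (eq_bigr _ (fun j _ => expr2 _)) u0) i isT.
by rewrite sqrf_eq0 => /eqP.
Qed.

Lemma dot_gt0 u : u != 0 -> 0 < dot u u.
Proof. by move=> u_nz; rewrite lt_def dot_ge0 andbT; apply: contra u_nz => /eqP/dot_eq0->. Qed.

Lemma dot_delta (p q : 'I_k) :
  dot (delta_mx 0 p) (delta_mx 0 q) = (p == q)%:R.
Proof.
rewrite /dot (bigD1 p) //= big1 => [|i ip]; rewrite !mxE ?eqxx /=.
  by rewrite mul1r addr0 eq_sym.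
by rewrite (negbTE ip) mul0r.
Qed.

End InnerProduct.

Lemma edistE (R : realType) (k : nat) (u v : 'rV[R]_k) :
  edist u v = Num.sqrt (dot (u - v) (u - v)).
Proof. by rewrite /edist; congr Num.sqrt; apply: eq_bigr => i _; rewrite !mxE expr2. Qed.

Lemma edist_sq (R : realType) (k : nat) (u v : 'rV[R]_k) (r : R) :
  edist u v = r -> dot (u - v) (u - v) = r ^+ 2.
Proof. by rewrite edistE => <-; rewrite sqr_sqrtr // dot_ge0. Qed.

Lemma centred_chord_on_sphere (R : realFieldType) (k : nat) (A B : 'rV[R]_k) (s t : R) :
  dot A A = s -> dot B B = s ->
  dot ((1 - t) *: A + t *: B) ((1 - t) *: A + t *: B) = s ->
  [\/ t = 0, t = 1 | A = B].
Proof.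
move=> HA HB; rewrite !(dotDl, dotDr, dotZl, dotZr) (dotC B) HA HB => Hp.
have /eqP : 2 * t * (1 - t) * (dot A B - s) = 0.
  by move/eqP: Hp; rewrite -subr_eq0 => /eqP <-; ring.
rewrite !mulf_eq0 pnatr_eq0 !subr_eq0 /= => /orP [/orP [/eqP t0 | /eqP t1] | /eqP AB].
- by constructor 1.
- by constructor 2.
constructor 3; apply/eqP; rewrite -subr_eq0; apply/eqP/dot_eq0.
by rewrite dot_sub_expand HA HB AB; ring.
Qed.

Lemma sphere_segment_endpoint (R : realType) (k : nat) (p a b c : 'rV[R]_k) (s : R) :
  dot (a - c) (a - c) = s -> dot (b - c) (b - c) = s -> dot (p - c) (p - c) = s ->
  on_segment p a b -> p = a \/ p = b.
Proof.
move=> Ha Hb Hp [t [_ [_ Ep]]].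
have Epc : p - c = (1 - t) *: (a - c) + t *: (b - c).
  by rewrite Ep !scalerBr addrACA -opprD -scalerDl subrK scale1r.
rewrite Epc in Hp; case: (centred_chord_on_sphere Ha Hb Hp) => [t0 | t1 | /addIr ab].
- by left; rewrite Ep t0 subr0 scale1r scale0r addr0.
- by right; rewrite Ep t1 subrr scale0r add0r scale1r.
by left; rewrite Ep ab -scalerDl subrK scale1r.
Qed.

Lemma orthonormal_spherical_embedding (R : realType) (V : finType) (e : rel V) (k : nat)
    (w : V -> 'rV[R]_k) :
  injective w -> (forall v, dot (w v) (w v) = 1) ->
  (forall u v, e u v -> dot (w u) (w v) = 0) ->
  spherical_embedding e k (Num.sqrt 2^-1 : R).
Proof.
move=> w_inj w_unit w_orth; set h := Num.sqrt 2^-1.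
have h2 : h ^+ 2 = 2^-1 by rewrite sqr_sqrtr // invr_ge0 ler0n.
have h_nz : h != 0 by rewrite sqrtr_eq0 -ltNge invr_gt0 ltr0n.
pose f v := h *: w v.
have f_sphere v : dot (f v - 0) (f v - 0) = 2^-1.
  by rewrite subr0 dotZl dotZr w_unit mulr1 -expr2 h2.
exists f; split; last by exists 0 => v; rewrite edistE f_sphere.
split; first by move=> u v /(scalerI h_nz)/w_inj.
split.
  move=> u v /w_orth uv; rewrite edistE dot_sub_expand !(dotZl, dotZr) !w_unit uv.
  by rewrite !mulr1 !mulr0 subr0 -expr2 h2 -[2^-1]mul1r -splitr sqrtr1.
move=> u v x _ xu xv /(sphere_segment_endpoint (f_sphere u) (f_sphere v) (f_sphere x)).
by case=> /(scalerI h_nz)/w_inj eq_x; [move: xu | move: xv]; rewrite eq_x eqxx.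
Qed.

Section UpperBound.
Variables (R : realType) (m : nat).

Definition frame (v : 'I_m + 'I_3) : 'rV[R]_(m + 2) :=
  match v with
  | inl i => delta_mx 0 (lshift 2 i)
  | inr l => match val l with
             | 0 => delta_mx 0 (rshift m ord0)
             | 1 => - delta_mx 0 (rshift m ord0)
             | _ => delta_mx 0 (rshift m ord_max)
             end
  end.

Lemma frame_unit v : dot (frame v) (frame v) = 1.
Proof.
by case: v => [i|[[|[|l]] ?]] /=; rewrite ?(dotNl, dotNr, opprK) dot_delta eqxx.
Qed.

Lemma frame_orthogonal u v : K_plus_eps3 m u v -> dot (frame u) (frame v) = 0.
Proof.
case: u => [i|[[|[|l]] ?]]; case: v => [i'|[[|[|l']] ?]] //=;
  rewrite ?(dotNl, dotNr) dot_delta ?eq_lshift ?eq_lrshift ?eq_rlshift ?oppr0 //.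
by move=> /negbTE ->.
Qed.

(* Distinct vertices are sent to vectors with inner product 0 or -1. *)
Lemma frame_dot_eq1 u v : dot (frame u) (frame v) = 1 -> u = v.
Proof.
case: u => [i|[[|[|l]] Hl]]; case: v => [i'|[[|[|l']] Hl']] /=;
  rewrite ?(dotNl, dotNr, opprK) dot_delta ?eq_lshift ?eq_rshift ?eq_lrshift ?eq_rlshift /=;
  try by move=> absurd; exfalso; lra.
- by have [->|_] := eqVneq i i' => // /eqP; rewrite eq_sym oner_eq0.
all: by move=> _; congr inr; apply: val_inj => /=; lia.
Qed.

Lemma frame_inj : injective frame.
Proof. by move=> u v fuv; apply: frame_dot_eq1; rewrite fuv frame_unit. Qed.

Lemma K_plus_eps3_sph_lt1 : sph_lt1 R (K_plus_eps3 m) (m + 2).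
Proof.
exists (Num.sqrt 2^-1); split; last first.
  exact: orthonormal_spherical_embedding frame_inj frame_unit frame_orthogonal.
by rewrite -[X in _ < X]sqrtr1 ltr_sqrt ?ltr01 // invf_lt1 ?ltr1n ?ltr0n.
Qed.

End UpperBound.

Lemma sphere_chords_free (R : realFieldType) (k : nat) (b x y : 'rV[R]_k) (mu nu : R) :
  dot (b + x) (b + x) = dot b b -> dot (b + y) (b + y) = dot b b ->
  x != 0 -> y != 0 -> x != y ->
  mu *: x + nu *: y = 0 -> mu = 0 /\ nu = 0.
Proof.
move=> on_x on_y x_nz y_nz; rewrite -subr_eq0 => /dot_gt0.
rewrite dot_sub_expand => xy_pos comb.
have foot z : dot (b + z) (b + z) = dot b b -> 2 * dot z b = - dot z z.
  by rewrite !(dotDl, dotDr) (dotC b z) => h; lra.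
have comb_dot w : mu * dot x w + nu * dot y w = 0.
  by rewrite -!dotZl -dotDl comb dot0l.
move: (foot _ on_x) (foot _ on_y) (comb_dot b) (comb_dot x) (comb_dot y).
rewrite (dotC y x); move: (dot_gt0 x_nz) (dot_gt0 y_nz) xy_pos.
move: (dot x x) (dot y y) (dot x y) (dot x b) (dot y b) => xx yy xy xb yb.
move=> x_pos y_pos xy_pos fx fy eb ex ey.
have sum_eq : mu * xx + nu * yy = 0 by nra.
(* Now mu (xy - xx) = 0 and nu (xy - yy) = 0, and the two factors xy - xx and xy - yy
   cannot both vanish since xx + yy - 2 xy > 0. *)
have cancel_factor (a c : R) : c != 0 -> a * c = 0 -> a = 0.
  by move=> c_nz /eqP; rewrite mulf_eq0 (negbTE c_nz) orbF => /eqP.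
have [xy_yy | xy_yy] := eqVneq xy yy.
  have mu0 : mu = 0.
    by apply: (cancel_factor _ (xx - xy)); [apply: lt0r_neq0 | ]; lra.
  by split => //; apply: (cancel_factor _ yy); [exact: lt0r_neq0 | nra].
have nu0 : nu = 0 by apply: (cancel_factor _ (xy - yy)); [rewrite subr_eq0 | nra].
by split => //; apply: (cancel_factor _ xx); [exact: lt0r_neq0 | nra].
Qed.

Lemma free_family_card_le (R : fieldType) (I : finType) (k : nat) (g : I -> 'rV[R]_k) :
  (forall x : I -> R, \sum_i x i *: g i = 0 -> forall i, x i = 0) -> (#|I| <= k)%N.
Proof.
move=> g_free; pose M := \matrix_(i < #|I|) g (enum_val i).
suff /eqP <- : row_free M by exact: rank_leq_col.
rewrite -kermx_eq0; apply/rowV0P => x /sub_kermxP xM.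
have x0 := g_free (fun v => x 0 (enum_rank v)).
apply/rowP => i; rewrite mxE -(enum_valK i) x0 //.
rewrite -[RHS]xM mulmx_sum_row (reindex _ (onW_bij _ (@enum_val_bij I))).
by apply: eq_bigr => j _; rewrite rowK enum_valK.
Qed.

Section LowerBound.
Variables (R : realFieldType) (m k : nat) (s : R) (A : 'I_m + 'I_3 -> 'rV[R]_k).
Hypothesis A_inj : injective A.
Hypothesis A_sphere : forall v, dot (A v) (A v) = s.
Hypothesis A_edge : forall u v, K_plus_eps3 m u v -> 2 * dot (A u) (A v) = 2 * s - 1.

Let base : 'rV[R]_k := A (inr ord0).

Definition far_vertex (t : bool) : 'I_3 := if t then Ordinal (isT : (1 < 3)%N) else ord_max.

Definition chord (t : bool) : 'rV[R]_k := A (inr (far_vertex t)) - base.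

Definition witness_family (v : 'I_m + bool) : 'rV[R]_k :=
  match v with inl i => A (inl i) | inr t => chord t end.

(* Each clique vertex is equidistant from the independent vertices, so it is orthogonal
   to the chords between them. *)
Lemma clique_orthogonal_chord i t : dot (A (inl i)) (chord t) = 0.
Proof.
rewrite dotBr; have := @A_edge (inl i) (inr ord0) isT.
by have := @A_edge (inl i) (inr (far_vertex t)) isT; lra.
Qed.

Lemma clique_dual i j : 2 * dot (A (inl i)) (A (inl j) - base) = (i == j)%:R.
Proof.
rewrite dotBr mulrBr (@A_edge (inl i) (inr ord0)) //; have [<-|ij] := eqVneq i j.
  by rewrite A_sphere /=; ring.
by rewrite (@A_edge (inl i) (inl j)) /=; [ring | exact: ij].
Qed.

(* The witness family is linearly independent: the clique part of a vanishing combination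
   is orthogonal to the chord part, so both vanish; then the chords are independent and the
   clique coefficients are read off with the dual family. *)
Lemma witness_family_free (x : 'I_m + bool -> R) :
  \sum_v x v *: witness_family v = 0 -> forall v, x v = 0.
Proof.
rewrite big_sumType big_bool /=.
set p := \sum_i _; set q := _ *: chord true + _ *: chord false => pq0.
have p_orth t : dot p (chord t) = 0.
  by rewrite dot_suml big1 // => i _; rewrite dotZl clique_orthogonal_chord mulr0.
have q0 : q = 0.
  have qE : q = - p by apply/eqP; rewrite -addr_eq0 addrC pq0.
  apply: dot_eq0; rewrite {1}qE dotNl /q dotDr !dotZr !p_orth.
  by rewrite !mulr0 addr0 oppr0.
have [mu0 nu0] : x (inr true) = 0 /\ x (inr false) = 0.
  apply: (sphere_chords_free (b := base)) q0; rewrite /chord ?subrKC ?A_sphere //.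
  - by rewrite subr_eq0 (inj_eq A_inj).
  - by rewrite subr_eq0 (inj_eq A_inj).
  - by rewrite (inj_eq (addIr _)) (inj_eq A_inj).
have p0 : p = 0 by rewrite -pq0 q0 addr0.
have lam i : x (inl i) = 0.
  have := congr1 (fun w => 2 * dot w (A (inl i) - base)) p0.
  rewrite /= dot0l mulr0 dot_suml mulr_sumr (bigD1 i) //= big1 => [|j ji].
    by rewrite dotZl mulrCA clique_dual eqxx mulr1 addr0.
  by rewrite dotZl mulrCA clique_dual (negbTE ji) mulr0.
by case=> [i|[]].
Qed.

End LowerBound.

Lemma spherical_embedding_dim_ge (R : realType) (m k : nat) (r : R) :
  spherical_embedding (K_plus_eps3 m) k r -> (m + 2 <= k)%N.
Proof.
move=> [f [[f_inj [f_edge _]] [c f_sphere]]].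
pose A v := f v - c.
have A_inj : injective A by move=> u v /addIr/f_inj.
have A_sphere v : dot (A v) (A v) = r ^+ 2 by exact: edist_sq.
have A_edge u v : K_plus_eps3 m u v -> 2 * dot (A u) (A v) = 2 * r ^+ 2 - 1.
  move=> /f_edge/edist_sq; have -> : f u - f v = A u - A v by rewrite opprB addrA subrK.
  by rewrite dot_sub_expand !A_sphere expr1n => uv; lra.
have := free_family_card_le (witness_family_free A_inj A_sphere A_edge).
by rewrite card_sum card_bool card_ord.
Qed.

Local Close Scope ring_scope.

Theorem mainTheorem17 (R : realType) (n : nat) :
  (4 <= n)%N -> is_sdim R (K_plus_eps3 (n - 3)) (n - 1).
Proof.
move=> n_ge4; split.
  have -> : n - 1 = (n - 3) + 2 by lia.
  exact: K_plus_eps3_sph_lt1.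
move=> j j_lt [r [_ emb]]; have := spherical_embedding_dim_ge emb; lia.
Qed.
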